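(* Let $n\in\mathbb{N}$ with $n\ge 2$ and define $$\alpha:=\frac{n+\sqrt{n^2+4}}{2},\qquad \gamma:=\frac1\alpha,\qquad \tau:=\frac{\log\alpha}{\log n}.$$ Then $\alpha\in D_{\gamma,\tau}$ and $\alpha$ is an isolated point of $D_{\gamma,\tau}$ (i.e. there is an open interval containing $\alpha$ whose intersection with $D_{\gamma,\tau}$ is $\{\alpha\}$).
   Context: For $\gamma>0$ and $\tau\ge 1$, the Diophantine set $D_{\gamma,\tau}$ is the set of all real numbers $\xi$ such that $|\xi q-p|\ge \gamma/q^{\tau}$ for all $p\in\mathbb{Z}$ and all $q\in\mathbb{N}=\{1,2,3,\dots\}$. *)

From Stdlib Require Import Reals.
Open Scope R_scope.

Definition Diophantine (gamma tau : R) (xi : R) : Prop :=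
  forall (p : Z) (q : nat), (1 <= q)%nat ->
    Rabs (xi * INR q - IZR p) >= gamma / Rpower (INR q) tau.

From Stdlib Require Import Reals Lra Lia Psatz ZArith.
Open Scope R_scope.

(* Write [a] for the root [alpha] of [x^2 = n x + 1], so that [/ a = a - n]
   and [n^tau = a].  For [e = a q - p] there are three cases.  If [p <= n q]
   then [e >= q (a - n) >= / a].  Otherwise [p = n q + q'] with [q' >= 1], and
   the identity [a q - (n q + q') = -(a q' - q) / a] (multiplication by the
   conjugate unit) turns [e] into an approximation of [a] with denominator [q'].
   If [q < n q'], then [a q' - q >= 1]; if [n q' <= q], then [q' < q] and
   induction applies, the loss of a factor [a] being compensated by
   [q^tau >= (n q')^tau = a q'^tau].  The isolation of [a] comes from testing
   [x] against [n/1] and [(n^2 + 1)/n]. *)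

Lemma Rpower_ge_1 (x t : R) : 1 <= x -> 0 <= t -> 1 <= Rpower x t.
Proof.
  intros Hx Ht. rewrite <- (Rpower_O x) by lra. now apply Rle_Rpower.
Qed.

Lemma INR_ge_1 (q : nat) : (1 <= q)%nat -> 1 <= INR q.
Proof. intro Hq. apply (le_INR 1). exact Hq. Qed.

Section QuadraticUnit.

Variables (n : nat) (a t : R).
Hypothesis n_ge2 : (2 <= n)%nat.
Hypothesis a_pos : 0 < a.
Hypothesis a_quadratic : a * a = INR n * a + 1.
Hypothesis Rpower_n_t : Rpower (INR n) t = a.

Lemma INR_n_ge2 : 2 <= INR n.
Proof. apply (le_INR 2). exact n_ge2. Qed.

Lemma n_lt_a : INR n < a.
Proof. pose proof INR_n_ge2. nra. Qed.

Lemma inv_a : / a = a - INR n.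
Proof.
  apply (Rmult_eq_reg_l a); [| lra].
  rewrite Rinv_r by lra. lra.
Qed.

Lemma t_ge0 : 0 <= t.
Proof.
  destruct (Rle_lt_dec 0 t) as [Ht | Ht]; [exact Ht |].
  pose proof INR_n_ge2. pose proof n_lt_a.
  pose proof (Rpower_lt (INR n) t 0 ltac:(lra) Ht).
  rewrite Rpower_O, Rpower_n_t in * by lra. lra.
Qed.

Lemma Rpower_mul_n (q : nat) :
  (1 <= q)%nat -> Rpower (INR n * INR q) t = a * Rpower (INR q) t.
Proof.
  intro Hq. pose proof INR_n_ge2. pose proof (INR_ge_1 q Hq).
  rewrite <- Rpower_mult_distr, Rpower_n_t by lra. reflexivity.
Qed.

Lemma dist_conj (q q' : R) : a * q - (INR n * q + q') = - / a * (a * q' - q).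
Proof.
  rewrite inv_a.
  assert (E : (a * a - INR n * a - 1) * q' = 0) by (rewrite a_quadratic; ring).
  lra.
Qed.

Lemma diophantine_bound_of_inv_a_le (q : nat) (e : R) :
  (1 <= q)%nat -> / a <= Rabs e -> / a / Rpower (INR q) t <= Rabs e.
Proof.
  intros Hq He. pose proof (Rpower_ge_1 (INR q) t (INR_ge_1 q Hq) t_ge0).
  pose proof (Rinv_0_lt_compat a a_pos).
  assert (/ a / Rpower (INR q) t <= / a); [| lra].
  unfold Rdiv. rewrite <- (Rmult_1_r (/ a)) at 2.
  apply Rmult_le_compat_l; [lra |].
  rewrite <- Rinv_1. apply Rinv_le_contravar; lra.
Qed.

Lemma inv_a_le_dist_below (q : nat) (p : R) :
  (1 <= q)%nat -> p <= INR n * INR q -> / a <= Rabs (a * INR q - p).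
Proof.
  intros Hq Hp. pose proof (INR_ge_1 q Hq). pose proof n_lt_a.
  rewrite inv_a, Rabs_right by nra. nra.
Qed.

Lemma inv_a_le_dist_above (q q' : nat) :
  (q < n * q')%nat -> / a <= Rabs (a * INR q - (INR n * INR q + INR q')).
Proof.
  intro Hq. pose proof n_lt_a. pose proof (Rinv_0_lt_compat a a_pos).
  assert (Hq1 : INR q + 1 <= INR n * INR q').
  { rewrite <- mult_INR, <- S_INR. apply le_INR. lia. }
  assert (1 <= a * INR q' - INR q) by (pose proof (pos_INR q'); nra).
  rewrite dist_conj, Rabs_mult, Rabs_Ropp, Rabs_inv, (Rabs_right a),
    (Rabs_right (_ - _)) by lra.
  nra.
Qed.

Lemma inv_a_div_Rpower_le_dist (q : nat) (p : Z) :
  (1 <= q)%nat -> / a / Rpower (INR q) t <= Rabs (a * INR q - IZR p).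
Proof.
  revert p. induction q as [q IH] using lt_wf_ind. intros p Hq.
  destruct (Z_le_gt_dec p (Z.of_nat (n * q))) as [Hp | Hp].
  { apply diophantine_bound_of_inv_a_le, inv_a_le_dist_below; [exact Hq | exact Hq |].
    rewrite <- mult_INR, INR_IZR_INZ. now apply IZR_le. }
  set (q' := Z.to_nat (p - Z.of_nat (n * q))).
  assert (Hq' : (1 <= q')%nat) by lia.
  assert (Hpq : IZR p = INR n * INR q + INR q').
  { rewrite <- mult_INR, <- plus_INR, INR_IZR_INZ. f_equal. lia. }
  rewrite Hpq.
  destruct (Nat.lt_ge_cases q (n * q')) as [Hlt | Hge].
  { now apply diophantine_bound_of_inv_a_le, inv_a_le_dist_above. }
  assert (IHq' := IH q' ltac:(nia) (Z.of_nat q) Hq').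
  rewrite <- INR_IZR_INZ in IHq'.
  assert (Hpow : a * Rpower (INR q') t <= Rpower (INR q) t).
  { rewrite <- Rpower_mul_n by exact Hq'.
    apply Rle_Rpower_l; [exact t_ge0 |].
    pose proof INR_n_ge2. pose proof (INR_ge_1 q' Hq').
    split; [nra | rewrite <- mult_INR; now apply le_INR]. }
  pose proof (Rpower_ge_1 (INR q') t (INR_ge_1 q' Hq') t_ge0).
  pose proof (Rinv_0_lt_compat a a_pos).
  rewrite dist_conj, Rabs_mult, Rabs_Ropp, Rabs_inv, (Rabs_right a) by lra.
  apply Rle_trans with (/ a * (/ a / Rpower (INR q') t));
    [| now apply Rmult_le_compat_l; lra].
  unfold Rdiv. apply Rmult_le_compat_l; [lra |].
  rewrite <- Rinv_mult. apply Rinv_le_contravar; nra.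
Qed.

Lemma diophantine_quadratic_unit : Diophantine (/ a) t a.
Proof. intros p q Hq. now apply Rle_ge, inv_a_div_Rpower_le_dist. Qed.

Lemma diophantine_isolated (x : R) :
  INR n < x < INR n + / INR n -> Diophantine (/ a) t x -> x = a.
Proof.
  intros [Hx1 Hx2] D.
  pose proof INR_n_ge2. pose proof n_lt_a. pose proof inv_a.
  pose proof (D (Z.of_nat n) 1%nat (le_n 1)) as D1.
  pose proof (D (Z.of_nat (n * n + 1)) n ltac:(lia)) as D2.
  rewrite <- INR_IZR_INZ in D1, D2.
  rewrite plus_INR, mult_INR in D2. simpl INR in D1, D2.
  unfold Rpower at 1 in D1.
  rewrite ln_1, Rmult_0_r, exp_0, Rmult_1_r, Rdiv_1_r, Rabs_right in D1 by lra.
  rewrite Rpower_n_t in D2.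
  assert (Hxn : x * INR n < INR n * INR n + 1).
  { replace (INR n * INR n + 1) with ((INR n + / INR n) * INR n) by (field; lra).
    nra. }
  rewrite Rabs_left in D2 by lra.
  assert (/ a / a = (a - INR n) * (a - INR n)) by (unfold Rdiv; now rewrite inv_a).
  nra.
Qed.

Lemma a_lt_n_add_inv : a < INR n + / INR n.
Proof.
  pose proof INR_n_ge2. pose proof n_lt_a.
  assert (/ a < / INR n) by (apply Rinv_lt_contravar; nra).
  rewrite inv_a in *. lra.
Qed.

End QuadraticUnit.

Theorem theorem1 (n : nat) (hn : (2 <= n)%nat) :
  let alpha := (INR n + sqrt (INR n ^ 2 + 4)) / 2 in
  let gamma := / alpha in
  let tau := ln alpha / ln (INR n) in
  Diophantine gamma tau alpha /\
  exists a b : R, a < alpha < b /\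
    forall x : R, a < x < b -> Diophantine gamma tau x -> x = alpha.
Proof.
  intros alpha gamma tau.
  pose proof (INR_n_ge2 n hn).
  assert (Hs : sqrt (INR n ^ 2 + 4) * sqrt (INR n ^ 2 + 4) = INR n ^ 2 + 4)
    by (apply sqrt_sqrt; nra).
  pose proof (sqrt_pos (INR n ^ 2 + 4)).
  assert (Ha_pos : 0 < alpha) by (unfold alpha; lra).
  assert (Ha_quad : alpha * alpha = INR n * alpha + 1) by (unfold alpha; nra).
  assert (Hlnn : 0 < ln (INR n)) by (rewrite <- ln_1; apply ln_increasing; lra).
  assert (Hpow : Rpower (INR n) tau = alpha).
  { unfold Rpower, tau. field_simplify (ln alpha / ln (INR n) * ln (INR n)); [| lra].
    now apply exp_ln. }
  split.
  - now apply (diophantine_quadratic_unit n).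
  - exists (INR n), (INR n + / INR n). split.
    + split; [now apply n_lt_a | now apply (a_lt_n_add_inv n alpha)].
    + intro x. now apply (diophantine_isolated n alpha tau).
Qed.
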